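(* Let $(G,H,\mathcal{L})$ be a cut-and-project scheme with injective $\star$-map. Let $W\subseteq H$ and let $\Gamma\subseteq G$ satisfy $\Lambda_{W^\circ}\subseteq\Gamma\subseteq\Lambda_{\overline{W}}$. Then there exists $W'\subseteq H$ with $\Gamma=\Lambda_{W'}$ such that $W'$ has each of the properties precompactness, non-empty interior, topological regularity and measure-theoretic regularity which $W$ has. If additionally $G$ is $\sigma$-compact and $W$ is precompact and (Borel) measurable, then $W'$ is precompact and measurable.
   Context: A cut-and-project scheme $(G,H,\mathcal{L})$ consists of locally compact abelian groups $G,H$ and a discrete cocompact subgroup $\mathcal{L}\subseteq G\times H$ such that $\pi^G|_{\mathcal{L}}$ is injective and $\pi^H(\mathcal{L})$ is dense in $H$. Let $L=\pi^G(\mathcal{L})$; the $\star$-map $L\to H$ is $x^\star=\pi^H((\pi^G|_{\mathcal{L}})^{-1}(x))$. For $W\subseteq H$, $\Lambda_W=\{x\in L: x^\star\in W\}$. Precompact: $\overline W$ compact; topologically regular: $\overline W=\overline{W^\circ}$; measure-theoretically regular: $\partial W=\overline W\setminus W^\circ$ has Haar measure zero. *)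

From HB Require Import structures.
From mathcomp Require Import all_boot all_order all_algebra.
From mathcomp Require Import all_classical all_reals all_analysis.
Set Implicit Arguments. Unset Strict Implicit. Unset Printing Implicit Defensive.
Import Order.TTheory GRing.Theory Num.Theory.
Local Open Scope classical_set_scope.
Local Open Scope ring_scope.

Definition LCA (G : topologicalZmodType) : Prop :=
  hausdorff_space G /\
  (forall x : G, exists K : set G, compact K /\ nbhs x K).

Definition sigma_compact_space (G : topologicalType) : Prop :=
  exists K : nat -> set G, (forall n, compact (K n)) /\ \bigcup_n K n = [set: G].

Definition cut_and_project_scheme (G H : topologicalZmodType)
  (L : set (G * H)) : Prop :=
  LCA G /\ LCA H /\
   (L (0, 0) /\ (forall p q, L p -> L q -> L (p.1 - q.1, p.2 - q.2))) /\
   (forall p, L p -> exists U : set (G * H), [/\ open U, U p & U `&` L = [set p]]) /\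
   (exists K : set (G * H), compact K /\
      forall z : G * H, exists k l, [/\ K k, L l & z = (k.1 + l.1, k.2 + l.2)]) /\
   (forall p q, L p -> L q -> p.1 = q.1 -> p = q) /\
   closure [set p.2 | p in L] = [set: H].

(** Injectivity of the star-map L -> H, x |-> x^star. Since pi^G|_L is
    injective, (x, x^star) is the unique point of L above x. *)
Definition star_injective (G H : topologicalZmodType) (L : set (G * H)) : Prop :=
  forall p q, L p -> L q -> p.2 = q.2 -> p.1 = q.1.

Definition model_set (G H : topologicalZmodType) (L : set (G * H)) (W : set H)
  : set G := [set x | exists h, L (x, h) /\ W h].

Definition precompact_set (H : topologicalType) (W : set H) : Prop :=
  compact (closure W).

Definition topologically_regular (H : topologicalType) (W : set H) : Prop :=
  closure W = closure (interior W).

Definition borel_set (H : topologicalType) (A : set H) : Prop :=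
  smallest (sigma_algebra setT) open A.

Definition haar_measure (R : realType) (H : topologicalZmodType)
  (mu : set H -> \bar R) : Prop :=
  mu set0 = 0%E /\
      (forall A, borel_set A -> (0 <= mu A)%E) /\
      (forall F : nat -> set H, (forall n, borel_set (F n)) -> trivIset setT F ->
         (fun n => \sum_(i < n) mu (F i))%E @ \oo --> mu (\bigcup_n F n)) /\
      (forall (x : H) A, borel_set A -> mu [set x + a | a in A] = mu A) /\
      (forall K, compact K -> (mu K < +oo)%E) /\
      (forall U, open U -> U !=set0 -> (0 < mu U)%E) /\
      (forall A, borel_set A ->
         mu A = ereal_inf [set mu U | U in [set U | open U /\ A `<=` U]]) /\
      (forall U, open U ->
         mu U = ereal_sup [set mu K | K in [set K | compact K /\ K `<=` U]]).

Definition measure_regular (R : realType) (H : topologicalType)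
  (mu : set H -> \bar R) (W : set H) : Prop :=
  mu (closure W `\` interior W) = 0%E.

From HB Require Import structures.
From mathcomp Require Import all_boot all_order all_algebra.
From mathcomp Require Import all_classical all_reals all_analysis.
Set Implicit Arguments. Unset Strict Implicit. Unset Printing Implicit Defensive.
Import Order.TTheory GRing.Theory Num.Theory.
Local Open Scope classical_set_scope.
Local Open Scope ring_scope.

(* Take W' := W° ∪ Γ^⋆, where Γ^⋆ is the set of stars of points of Γ.
   Injectivity of the star map gives Γ = Λ_W', and W° ⊆ W' ⊆ cl W, which
   forces cl W' ⊆ cl W, W° ⊆ W'° and ∂W' ⊆ ∂W, so every window property
   passes from W to W'.
   For measurability, Γ^⋆ lies in the compact set cl W; above each compact
   piece K_n of G only finitely many points of the discrete lattice L lie in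
   K_n × cl W, so Γ^⋆ is a countable union of finite, hence closed, sets. *)

Lemma infinite_set_injective_seq T (A : set T) :
  infinite_set A -> exists2 f : nat -> T, forall n, A (f n) & injective f.
Proof.
move=> /infiniteP/card_leP[f].
exists (fun n => val (f (SigSub (mem_set (I : [set: nat] n))))).
  by move=> n; apply: set_mem; apply: valP.
by move=> m n /val_inj/inj => /(_ (in_setT _) (in_setT _)) /(congr1 val).
Qed.

Definition locally_subsingleton {X : topologicalType} (D : set X) :=
  forall x : X, exists2 V, nbhs x V & is_subset1 (V `&` D).

Lemma subset1_nat_eventually_notin (A : set nat) :
  is_subset1 A -> \forall n \near \oo, ~ A n.
Proof.
move=> sA; have [[n0 An0]|noA] := pselect (exists n, A n); last first.
  by apply: nearW => n An; apply: noA; exists n.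
exists n0.+1 => // n /= n0n An.
by move: n0n; rewrite (sA _ _ An An0) ltnn.
Qed.

(* An injective sequence in [K `&` D] eventually leaves a neighbourhood of each
   point, so by compactness it eventually leaves [K]. *)
Lemma locally_subsingleton_compact_finite (X : topologicalType) (D K : set X) :
  locally_subsingleton D -> compact K -> finite_set (K `&` D).
Proof.
move=> sD /compact_near_coveringP cK.
apply: contrapT => /infinite_set_injective_seq[f KDf injf].
have [Kf Df] : (forall n, K (f n)) /\ (forall n, D (f n)).
  by split=> n; case: (KDf n).
suff : \forall n \near \oo, K `<=` [set x | x <> f n].
  by move=> /filter_ex[n /(_ _ (Kf n))]; apply.
apply: cK => x _; have [V nV sV] := sD x.
have Vf : \forall n \near \oo, ~ V (f n).
  apply: (subset1_nat_eventually_notin (A := [set n | V (f n)])) => m n Vm Vn.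
  by apply: injf; apply: sV.
exists (V, [set n | ~ V (f n)]) => //= -[x' n] /= [Vx' nVn] x'fn.
by rewrite -x'fn in nVn.
Qed.

Section product_group.
Context (G H : topologicalZmodType).

Lemma prod_sub_continuous :
  continuous (fun x : (G * H) * (G * H) => x.1 - x.2).
Proof.
move=> [/= xy1 xy2] /= U /= [] [A B] /= [nA nB] nU.
have [/= A0 [A01 A02] nA1] := @sub_continuous G (xy1.1, xy2.1) _ nA.
have [/= B0 [B01 B02] nB1] := @sub_continuous H (xy1.2, xy2.2) _ nB.
exists ([set xy | A0.1 xy.1 /\ B0.1 xy.2], [set xy | A0.2 xy.1 /\ B0.2 xy.2]).
  by split; [exists (A0.1, B0.1)|exists (A0.2, B0.2)].
move=> [[x1 y1] [x2 y2]] /= [] [] a1 b1 [] a2 b2.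
by apply: nU; split; [exact: (nA1 (x1, x2))|exact: (nB1 (y1, y2))].
Qed.

(* The canonical [topologicalZmodType] instance on pairs is the one for
   products of topological vector spaces, hence an alias. *)
Definition prod_group : Type := (G * H)%type.
HB.instance Definition _ := GRing.Zmodule.on prod_group.
HB.instance Definition _ := Topological.on prod_group.
HB.instance Definition _ :=
  PreTopologicalNmodule_isTopologicalZmodule.Build prod_group prod_sub_continuous.

End product_group.

Lemma discrete_subgroup_locally_subsingleton (T : topologicalZmodType)
    (L U : set T) :
  (forall x y, L x -> L y -> L (x - y)) -> nbhs 0 U -> U `&` L `<=` [set 0] ->
  locally_subsingleton L.
Proof.
move=> subL nU UL0 x.
have : nbhs (x - x) U by rewrite subrr.
move=> /(@sub_continuous T (x, x))[[P Q] /= [nP nQ] PQU].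
exists (P `&` Q); first exact: filterI.
move=> p q [[Pp _] Lp] [[_ Qq] Lq]; apply/eqP; rewrite -subr_eq0; apply/eqP.
by apply: UL0; split; [exact: (PQU (p, q)) | exact: subL].
Qed.

Lemma borel_set_closed (T : topologicalType) (A : set T) :
  closed A -> borel_set A.
Proof.
move=> cA; rewrite -[A]setCK -setTD; apply: sigma_algebraCD.
by apply: sub_sigma_algebra; exact: closed_openC.
Qed.

Lemma borel_setU (T : topologicalType) (A B : set T) :
  borel_set A -> borel_set B -> borel_set (A `|` B).
Proof.
move=> bA bB; rewrite -bigcup2E; apply: sigma_algebra_bigcup => -[|[|n]] //=.
exact: sigma_algebra0.
Qed.

Lemma borel_set_boundary (T : topologicalType) (A : set T) :
  borel_set (closure A `\` interior A).
Proof.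
apply: borel_set_closed; apply: closedI; first exact: closed_closure.
by rewrite closedC; exact: open_interior.
Qed.

Lemma haar_measure_le (R : realType) (H : topologicalZmodType)
    (mu : set H -> \bar R) (A B : set H) :
  haar_measure mu -> borel_set A -> borel_set B -> A `<=` B -> (mu A <= mu B)%E.
Proof.
move=> [_ [_ [_ [_ [_ [_ [outer _]]]]]]] bA bB AB.
rewrite (outer _ bA) (outer _ bB); apply: le_ereal_inf => _ [U [oU BU] <-].
by exists U => //; split => //; exact: subset_trans BU.
Qed.

Section between_interior_and_closure.
Variables (X : topologicalType) (W V : set X).
Hypotheses (intW_V : interior W `<=` V) (V_clW : V `<=` closure W).

Lemma closure_between : closure V `<=` closure W.
Proof.
rewrite [X in _ `<=` X](closure_id _).1; first exact: closureS.
exact: closed_closure.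
Qed.

Lemma interior_between : interior W `<=` interior V.
Proof. by rewrite -open_subsetE //; exact: open_interior. Qed.

Lemma boundary_between :
  closure V `\` interior V `<=` closure W `\` interior W.
Proof.
move=> x [clVx nintVx]; split; first exact: closure_between.
by move=> /interior_between.
Qed.

Lemma precompact_between : precompact_set W -> precompact_set V.
Proof.
by move=> cW; apply: subclosed_compact cW closure_between; exact: closed_closure.
Qed.

Lemma topologically_regular_between :
  topologically_regular W -> topologically_regular V.
Proof.
move=> regW; apply/seteqP; split; last by apply: closureS; exact: interior_subset.
apply: subset_trans closure_between _; rewrite regW.
exact: closureS interior_between.
Qed.

End between_interior_and_closure.

Lemma measure_regular_between (R : realType) (H : topologicalZmodType)
    (mu : set H -> \bar R) (W V : set H) :
  interior W `<=` V -> V `<=` closure W -> haar_measure mu ->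
  measure_regular mu W -> measure_regular mu V.
Proof.
move=> intW_V V_clW haar regW; apply/eqP; rewrite eq_le; apply/andP; split.
  rewrite -regW; apply: haar_measure_le (boundary_between _ _);
    by [|exact: borel_set_boundary].
by case: haar => _ [+ _]; apply; exact: borel_set_boundary.
Qed.

Definition star_image {G H : Type} (L : set (G * H)) (Gamma : set G) : set H :=
  [set h | exists y, L (y, h) /\ Gamma y].

Section star_image.
Variables (G H : topologicalZmodType) (L : set (G * H)).

Lemma model_set_star_image (A : set H) (Gamma : set G) :
  star_injective L -> model_set L A `<=` Gamma -> Gamma `<=` model_set L setT ->
  Gamma = model_set L (A `|` star_image L Gamma).
Proof.
move=> sinj AGamma GammaL.
apply/seteqP; split=> [x Gx|x [h [Lxh [Ah|[y [Lyh Gy]]]]]].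
- by have [h [Lxh _]] := GammaL x Gx; exists h; split=> //; right; exists x.
- by apply: AGamma; exists h.
- by rewrite [x](sinj (x, h) (y, h)).
Qed.

Lemma star_image_subset (B : set H) (Gamma : set G) :
  (forall p q, L p -> L q -> p.1 = q.1 -> p = q) ->
  Gamma `<=` model_set L B -> star_image L Gamma `<=` B.
Proof.
move=> Linj GammaB h [y [Lyh /GammaB [h' [Lyh' Bh']]]].
by have [->] := Linj (y, h) (y, h') Lyh Lyh' erefl.
Qed.

Lemma star_image_compact_finite (K : set G) (C : set H) (Gamma : set G) :
  locally_subsingleton L -> compact K -> compact C -> star_image L Gamma `<=` C ->
  finite_set (star_image L (Gamma `&` K)).
Proof.
move=> Ldisc cK cC GammaC.
apply: (@sub_finite_set _ _ (snd @` ((K `*` C) `&` L))).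
  move=> h [y [Lyh [Gy Ky]]]; exists (y, h) => //; split=> //; split=> //=.
  by apply: GammaC; exists y.
apply: finite_image; apply: locally_subsingleton_compact_finite => //.
exact: compact_setX.
Qed.

Lemma star_image_borel (C : set H) (Gamma : set G) :
  hausdorff_space H -> sigma_compact_space G -> locally_subsingleton L ->
  compact C -> star_image L Gamma `<=` C -> borel_set (star_image L Gamma).
Proof.
move=> hausH [K [cK covK]] Ldisc cC GammaC.
have -> : star_image L Gamma = \bigcup_n star_image L (Gamma `&` K n).
  apply/seteqP; split=> [h [y [Lyh Gy]]|h [n _ [y [Lyh [Gy _]]]]]; last first.
    by exists y.
  have : [set: G] y by [].
  by rewrite -covK => -[n _ Kny]; exists n => //; exists y.
apply: sigma_algebra_bigcup => n; apply: borel_set_closed.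
apply: (accessible_finite_set_closed.1 (hausdorff_accessible hausH)).
exact: star_image_compact_finite Ldisc (cK n) cC GammaC.
Qed.

End star_image.

Theorem proposition2p4 (R : realType) (G H : topologicalZmodType)
  (L : set (G * H)) (W : set H) (Gamma : set G) :
  cut_and_project_scheme L ->
  star_injective L ->
  model_set L (interior W) `<=` Gamma ->
  Gamma `<=` model_set L (closure W) ->
  exists W' : set H,
    [/\ Gamma = model_set L W',
         precompact_set W -> precompact_set W',
         interior W !=set0 -> interior W' !=set0,
         topologically_regular W -> topologically_regular W' &
         forall mu : set H -> \bar R, haar_measure mu ->
           measure_regular mu W -> measure_regular mu W'] /\
    (sigma_compact_space G -> precompact_set W -> borel_set W ->
       precompact_set W' /\ borel_set W').
Proof.
move=> [_ [[hausH _] [[L0 Lsub] [Ldisc [_ [Linj _]]]]]] sinj intW_Gamma Gamma_clW.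
have starW : star_image L Gamma `<=` closure W by exact: star_image_subset.
pose W' := interior W `|` star_image L Gamma.
have intW_W' : interior W `<=` W' by move=> h; left.
have W'_clW : W' `<=` closure W.
  by move=> h [/interior_subset/subset_closure|/starW].
have Ldiscrete : locally_subsingleton L.
  have [U [oU U0 UL]] := Ldisc _ L0.
  apply: (@discrete_subgroup_locally_subsingleton (prod_group G H) _ U Lsub).
    exact: open_nbhs_nbhs.
  by rewrite UL.
exists W'; split; first split.
- by apply: model_set_star_image => // x /Gamma_clW [h [Lxh _]]; exists h.
- exact: precompact_between.
- by move=> [h intWh]; exists h; exact: interior_between intWh.
- exact: topologically_regular_between.
- by move=> mu; exact: measure_regular_between.
move=> sigmaG cW _; split; first exact: precompact_between cW.
apply: borel_setU; first by apply: sub_sigma_algebra; exact: open_interior.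
exact: star_image_borel sigmaG Ldiscrete cW starW.
Qed.
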